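(* Let $n\ge 1$, let $C, A_1,\ldots,A_m$ be real symmetric $n\times n$ matrices and $b\in\mathbb{R}^m$, and suppose the semidefinite program $$SOS^*:=\min_{X\in S_n}\ C\cdot X \quad\text{s.t. } A_i\cdot X=b_i\ (i=1,\ldots,m),\ X\succeq 0$$ has an optimal solution. For an $n\times n$ real matrix $U$ let $DD(U):=\{M\in S_n : M=U^TQU \text{ for some diagonally dominant } Q\in S_n\}$, and for a matrix $U$ consider the linear program $$LP(U):\quad \min_{X\in S_n} C\cdot X \quad\text{s.t. } A_i\cdot X=b_i\ (i=1,\ldots,m),\ X\in DD(U).$$ Define the sequence $U_0=I$, and for $k\ge 0$ let $DSOS_k$ be the optimal value of $LP(U_k)$, $X_k$ an optimal solution of $LP(U_k)$, and $U_{k+1}=\mathrm{chol}(X_k)$; assume an optimal solution exists at every iteration. Fix $k$, let $X_k$ and $X_{k+1}$ be optimal solutions of iterations $k$ and $k+1$, and assume that $X_k$ is positive definite and $SOS^*<DSOS_k$. Then $DSOS_{k+1}<DSOS_k$.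
   Context: $S_n$ denotes the real symmetric $n\times n$ matrices and $A\cdot B=\sum_{i,j}A_{ij}B_{ij}=\mathrm{Trace}(AB)$. A symmetric matrix $A$ is diagonally dominant if $a_{ii}\ge\sum_{j\ne i}|a_{ij}|$ for all $i$. For a positive semidefinite matrix $A$, $\mathrm{chol}(A)$ denotes an upper triangular (Cholesky) factor $U$ with $A=U^TU$ (unique with positive diagonal when $A$ is positive definite). *)

From HB Require Import structures.
From mathcomp Require Import all_boot all_order all_algebra.
From mathcomp Require Import reals.
Set Implicit Arguments. Unset Strict Implicit. Unset Printing Implicit Defensive.
Import Order.TTheory GRing.Theory Num.Theory.
Local Open Scope ring_scope.

Section Defs.
Variable R : realType.
Variable n : nat.

Definition frob_dot (A B : 'M[R]_n) : R := \sum_(i < n) \sum_(j < n) A i j * B i j.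

Definition symmx (A : 'M[R]_n) : Prop := A^T = A.

Definition is_psd (X : 'M[R]_n) : Prop :=
  symmx X /\ forall v : 'cV[R]_n, 0 <= (v^T *m X *m v) 0 0.

Definition is_pd (X : 'M[R]_n) : Prop :=
  symmx X /\ forall v : 'cV[R]_n, v != 0 -> 0 < (v^T *m X *m v) 0 0.

Definition diag_dominant (Q : 'M[R]_n) : Prop :=
  forall i : 'I_n, \sum_(j < n | j != i) `|Q i j| <= Q i i.

Definition inDD (U M : 'M[R]_n) : Prop :=
  symmx M /\
  exists Q : 'M[R]_n, symmx Q /\ diag_dominant Q /\ M = U^T *m Q *m U.

(* upper triangular factor U with A = U^T U (nonnegative diagonal, so that
   it is the unique Cholesky factor when A is positive definite) *)
Definition is_chol (U A : 'M[R]_n) : Prop :=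
  (forall i j : 'I_n, (j < i)%N -> U i j = 0) /\
  (forall i : 'I_n, 0 <= U i i) /\
  A = U^T *m U.

Variable m : nat.
Variables (C : 'M[R]_n) (Acon : 'I_m -> 'M[R]_n) (b : 'I_m -> R).

Definition lin_feasible (X : 'M[R]_n) : Prop :=
  forall i : 'I_m, frob_dot (Acon i) X = b i.

Definition sdp_optimal (X : 'M[R]_n) : Prop :=
  lin_feasible X /\ is_psd X /\
  forall Y, lin_feasible Y -> is_psd Y -> frob_dot C X <= frob_dot C Y.

Definition lp_optimal (U X : 'M[R]_n) : Prop :=
  lin_feasible X /\ inDD U X /\
  forall Y, lin_feasible Y -> inDD U Y -> frob_dot C X <= frob_dot C Y.

End Defs.

From mathcomp Require Import all_boot all_order all_algebra.
From mathcomp Require Import reals.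
From mathcomp Require Import ring lra.
Set Implicit Arguments.
Unset Strict Implicit.
Import Order.TTheory GRing.Theory Num.Theory.
Local Open Scope ring_scope.

(* Since X_k = V^T V with V := U_(k+1) invertible, X_k = V^T I V lies in the
   interior of DD(V): for any symmetric Y, the matrix
   (1 - t) I + t V^-T Y V^-1 is diagonally dominant for small t > 0, so the
   segment from X_k towards Y starts inside DD(V).  Taking for Y the SDP
   optimum, which is feasible and strictly better than X_k, yields a feasible
   point of LP(U_(k+1)) strictly better than X_k. *)

Section DiagDominantSegment.
Variables (R : realType) (n : nat).
Implicit Types (V W X Y : 'M[R]_n).

Lemma frob_dot_comb (A X Y : 'M[R]_n) (a c : R) :
  frob_dot A (a *: X + c *: Y) = a * frob_dot A X + c * frob_dot A Y.
Proof.
rewrite /frob_dot !mulr_sumr -big_split /=; apply: eq_bigr => i _.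
rewrite !mulr_sumr -big_split /=; apply: eq_bigr => j _.
by rewrite !mxE; ring.
Qed.

Lemma unitmx_pd_factor V : is_pd (V^T *m V) -> V \in unitmx.
Proof.
move=> [_ pdV]; rewrite unitmxE unitfE; apply/negP => /eqP detV0.
have /det0P [v v_neq0 vVT0] : \det V^T == 0 by rewrite det_tr detV0.
have vT_neq0 : v^T != 0 by apply: contra v_neq0 => /eqP vT0; rewrite -(trmxK v) vT0 trmx0.
have VvT0 : V *m v^T = 0 by rewrite -(trmxK V) -trmx_mul vVT0 trmx0.
have := pdV _ vT_neq0.
by rewrite trmxK !mulmxA vVT0 !mul0mx mxE ltxx.
Qed.

(* Any step size t <= 1 / (1 + sum_ij |W_ij|) works. *)
Lemma diag_dominant_shift W :
  exists2 t : R, 0 < t & diag_dominant ((1 - t)%:M + t *: W).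
Proof.
set S := \sum_(i < n) \sum_(j < n) `|W i j|.
have S_ge0 : 0 <= S by apply: sumr_ge0 => i _; apply: sumr_ge0.
set t := (1 + S)^-1.
have t_gt0 : 0 < t by rewrite invr_gt0; lra.
have tS : t * S = 1 - t by rewrite /t; field; apply/eqP => h; lra.
exists t => // i.
have row_le : \sum_(j < n) `|W i j| <= S.
  rewrite /S [leRHS](bigD1 i) //= lerDl.
  by apply: sumr_ge0 => l _; apply: sumr_ge0.
rewrite (bigD1 i) //= in row_le.
have -> : \sum_(j < n | j != i) `|((1 - t)%:M + t *: W) i j| =
          t * \sum_(j < n | j != i) `|W i j|.
  rewrite mulr_sumr; apply: eq_bigr => j ji.
  by rewrite !mxE eq_sym (negbTE ji) mulr0n add0r normrM gtr0_norm.
rewrite !mxE eqxx mulr1n.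
have := ler_wpM2l (ltW t_gt0) row_le; rewrite tS mulrDr.
have := ler_wpM2l (ltW t_gt0) (ler_norm (- W i i)).
rewrite normrN mulrN; lra.
Qed.

Lemma inDD_segment V Y :
  V \in unitmx -> symmx Y ->
  exists2 t : R, 0 < t & inDD V ((1 - t) *: (V^T *m V) + t *: Y).
Proof.
move=> V_unit Ysym.
set W := (invmx V)^T *m Y *m invmx V.
have Wsym : symmx W by rewrite /symmx /W !trmx_mul trmxK Ysym mulmxA.
have VWV : V^T *m W *m V = Y.
  rewrite /W !mulmxA -trmx_mul mulVmx // trmx1 mul1mx -mulmxA mulVmx //.
  by rewrite mulmx1.
have [t t_gt0 ddQ] := diag_dominant_shift W.
exists t => //; split.
  by rewrite /symmx linearD !linearZ /= trmx_mul trmxK Ysym.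
exists ((1 - t)%:M + t *: W); split; last split => //.
  by rewrite /symmx linearD linearZ /= tr_scalar_mx Wsym.
rewrite mulmxDr mulmxDl -VWV mul_mx_scalar.
by rewrite -scalemxAl -!scalemxAr -scalemxAl.
Qed.

End DiagDominantSegment.

Lemma lin_feasible_comb (R : realType) (n m : nat) (A : 'I_m -> 'M[R]_n)
  (b : 'I_m -> R) (X Y : 'M[R]_n) (t : R) :
  lin_feasible A b X -> lin_feasible A b Y ->
  lin_feasible A b ((1 - t) *: X + t *: Y).
Proof. by move=> feasX feasY i; rewrite frob_dot_comb feasX feasY; ring. Qed.

Theorem theorem3p1 (R : realType) (n m : nat) (C : 'M[R]_n)
  (A : 'I_m -> 'M[R]_n) (b : 'I_m -> R)
  (U X : nat -> 'M[R]_n) (Xs : 'M[R]_n) (k : nat) :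
  (0 < n)%N ->
  symmx C -> (forall i, symmx (A i)) ->
  sdp_optimal C A b Xs ->
  U 0%N = 1%:M ->
  (forall j, lp_optimal C A b (U j) (X j)) ->
  (forall j, is_chol (U j.+1) (X j)) ->
  is_pd (X k) ->
  frob_dot C Xs < frob_dot C (X k) ->
  frob_dot C (X k.+1) < frob_dot C (X k).
Proof.
move=> _ _ _ [feasXs [[Xs_sym _] _]] _ lp_opt chol pdXk sdp_lt.
have [_ [_ XkE]] := chol k.
have V_unit : U k.+1 \in unitmx by apply: unitmx_pd_factor; rewrite -XkE.
have [t t_gt0] := inDD_segment V_unit Xs_sym.
rewrite -XkE => ddY.
have [feasXk _] := lp_opt k.
have [_ [_ optXk1]] := lp_opt k.+1.
apply: le_lt_trans (optXk1 _ (lin_feasible_comb t feasXk feasXs) ddY) _.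
rewrite frob_dot_comb.
have : t * frob_dot C Xs < t * frob_dot C (X k) by rewrite ltr_pM2l.
lra.
Qed.
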